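(* Let $p$ be a prime and let $G$ be a $1$-tuple regular finite group of exponent $p^s$ for some $s\in\mathbb{N}$. For all nontrivial $a,b\in G$ we have $\operatorname{ord}([a,b])<\min\{\operatorname{ord}(a),\operatorname{ord}(b)\}$. In particular, if $p$ is odd, then $G$ is a powerful $p$-group.
   Context: $[a,b]=aba^{-1}b^{-1}$. A finite $p$-group $G$ is powerful if $p$ is odd and $G'\subseteq\mho^1(G)$, or $p=2$ and $G'\subseteq\mho^2(G)$, where $\mho^i(G)$ is generated by the $p^i$-th powers. A finite group $G$ is $1$-tuple regular if for all $g_1,h_1\in G$ of the same order there is a bijection $\Psi\colon G\to G$ such that for every $g\in G$ the assignment $g_1\mapsto h_1, g\mapsto\Psi(g)$ defines an isomorphism $\langle g_1,g\rangle\to\langle h_1,\Psi(g)\rangle$. *)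

From mathcomp Require Import all_boot all_fingroup all_solvable.
Set Implicit Arguments.
Unset Strict Implicit.
Unset Printing Implicit Defensive.
Import GroupScope.
Local Open Scope group_scope.

(* Paper's commutator convention: [a,b] = a b a^-1 b^-1. *)
Definition comm_ab (gT : finGroupType) (a b : gT) : gT := a * b * a^-1 * b^-1.

Definition mho (gT : finGroupType) (p i : nat) (G : {set gT}) : {set gT} :=
  <<[set x ^+ (p ^ i) | x in G]>>.

Definition powerful (gT : finGroupType) (p : nat) (G : {set gT}) : Prop :=
  if odd p then [~: G, G] \subset mho p 1 G
  else [~: G, G] \subset mho p 2 G.

Definition one_tuple_regular (gT : finGroupType) : Prop :=
  forall g1 h1 : gT, #[g1] = #[h1] ->
    exists Psi : gT -> gT, bijective Psi /\
      forall g : gT,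
        exists f : {morphism <<[set g1; g]>> >-> gT},
          isom <<[set g1; g]>> <<[set h1; Psi g]>> f /\
          f g1 = h1 /\ f g = Psi g.

From mathcomp Require Import all_boot all_fingroup all_solvable.
Set Implicit Arguments.
Unset Strict Implicit.
Unset Printing Implicit Defensive.
Local Open Scope group_scope.

(* In a 1-tuple regular group elements of equal order behave alike in every
   two-generator subgroup.  Hence which orders the commutators [x, _] take
   depends only on the order of x, so every term Z_n of the upper central
   series is a union of order classes.  If a lies in Z_(n+1) but not in Z_n,
   then [a, b] lies in Z_n; in a p-group a commutator of order at least ord(a)
   would have a power of order exactly ord(a) in Z_n, forcing a into Z_n.
   Likewise an element c of order below the exponent has the order of some
   power x^(kp), and regularity maps x^(kp) to c, so c is a p-th power. *)

Lemma mem_gen_pair (gT : finGroupType) (x y : gT) :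
  x \in <<[set x; y]>> /\ y \in <<[set x; y]>>.
Proof. by split; apply: mem_gen; rewrite !inE eqxx ?orbT. Qed.

Section PGroupOrders.

Variables (gT : finGroupType) (p : nat) (G : {group gT}).
Hypotheses (p_pr : prime p) (pG : p.-group G).

Lemma pgroup_exists_power_of_order x y : x \in G -> y \in G ->
  (#[x] <= #[y])%N -> exists k, #[y ^+ k] = #[x].
Proof.
move=> Gx Gy; have [i oxi] := p_natP (mem_p_elt pG Gx).
have [j oyj] := p_natP (mem_p_elt pG Gy).
rewrite oxi oyj leq_exp2l ?prime_gt1 // => le_ij.
by exists (p ^ (j - i))%N; rewrite (orderXexp _ oyj) subKn.
Qed.

Lemma pgroup_ltn_order_leq_expp x y : x \in G -> y \in G ->
  (#[x] < #[y])%N -> (#[x] <= #[y ^+ p])%N.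
Proof.
move=> Gx Gy; have [i oxi] := p_natP (mem_p_elt pG Gx).
have [j oyj] := p_natP (mem_p_elt pG Gy).
have p_gt1 := prime_gt1 p_pr.
rewrite -[p in y ^+ p]expn1 (orderXexp _ oyj) oxi oyj !leq_exp2l //.
rewrite ltn_exp2l // => lt_ij.
by rewrite -ltnS subn1 prednK // (leq_ltn_trans _ lt_ij).
Qed.

End PGroupOrders.

Section OneTupleRegular.

Variable gT : finGroupType.
Hypothesis reg : one_tuple_regular gT.

Lemma regular_order_commg (x y h : gT) : #[x] = #[y] ->
  exists g, #[[~ y, h]] = #[[~ x, g]].
Proof.
move=> oxy; have [Psi [[Phi _ PhiK] HPsi]] := reg oxy.
exists (Phi h); rewrite -{1}(PhiK h).
have [f [isof [fx fg]]] := HPsi (Phi h).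
have [Dx Dg] := mem_gen_pair x (Phi h).
by rewrite -fx -fg -morphR // order_injm ?groupR // (isom_inj isof).
Qed.

Lemma regular_root_of_order (x c : gT) k :
  #[x ^+ k] = #[c] -> exists y, c = y ^+ k.
Proof.
move=> oxc; have [Psi [_ HPsi]] := reg oxc.
have [f [_ [fxk fx]]] := HPsi x.
have [_ Dx] := mem_gen_pair (x ^+ k) x.
by exists (Psi x); rewrite -fxk morphX ?fx.
Qed.

Lemma ucnS_commP n (x : gT) :
  reflect (forall g, [~ x, g] \in 'Z_n([set: gT])) (x \in 'Z_n.+1([set: gT])).
Proof.
rewrite ucnSnR inE in_setT gen_subG.
apply: (iffP subsetP) => [Zx g | Zx _ /imset2P[_ g /set1P-> _ ->] //].
by apply: Zx; apply: imset2_f; rewrite ?inE.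
Qed.

Lemma regular_ucn_order_closed n (x y : gT) :
  x \in 'Z_n([set: gT]) -> #[x] = #[y] -> y \in 'Z_n([set: gT]).
Proof.
elim: n x y => [|n IHn] x y.
  by rewrite ucn0 !inE -!order_eq1 => /eqP o1 <-; rewrite o1.
move=> /ucnS_commP Zx oxy; apply/ucnS_commP => h.
have [g oxg] := regular_order_commg h oxy.
exact: IHn (Zx g) _.
Qed.

Variable p : nat.
Hypotheses (p_pr : prime p) (pG : p.-group [set: gT]).

Lemma regular_order_commg_lt (a b : gT) : a != 1 -> (#[[~ a, b]] < #[a])%N.
Proof.
move=> nt_a; have [m Zm] := ucnP _ (pgroup_nil pG).
have inZ : exists n, a \in 'Z_n([set: gT]) by exists m; rewrite Zm inE.
case: (ex_minnP inZ) => [[|n]]; first by rewrite ucn0 inE (negbTE nt_a).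
move=> /ucnS_commP Za min_n; have Zab := Za b.
rewrite ltnNge; apply/negP.
case/(pgroup_exists_power_of_order p_pr pG (in_setT a) (in_setT _)) => k ok.
have := min_n n (regular_ucn_order_closed (groupX k Zab) ok).
by rewrite ltnn.
Qed.

Lemma regular_order_lt_exponent_mho (c : gT) :
  (#[c] < exponent [set: gT])%N -> c \in mho p 1 [set: gT].
Proof.
have [x _ ->] := exponent_witness (pgroup_nil pG) => lt_cx.
have [k ok] := pgroup_exists_power_of_order p_pr pG (in_setT c) (in_setT _)
  (pgroup_ltn_order_leq_expp p_pr pG (in_setT c) (in_setT x) lt_cx).
rewrite -expgM mulnC in ok; have [y ->] := regular_root_of_order ok.
rewrite expgM; apply: mem_gen; apply/imsetP.
by exists (y ^+ k); rewrite ?inE ?expn1.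
Qed.

End OneTupleRegular.

Lemma comm_abE (gT : finGroupType) (a b : gT) : comm_ab a b = [~ a^-1, b^-1].
Proof. by rewrite /comm_ab commgEl conjgE !invgK !mulgA. Qed.

Lemma invg_comm_ab (gT : finGroupType) (a b : gT) :
  (comm_ab a b)^-1 = comm_ab b a.
Proof. by rewrite /comm_ab !invMg !invgK !mulgA. Qed.

Theorem lemma4p4 (gT : finGroupType) (p s : nat) :
  prime p ->
  one_tuple_regular gT ->
  exponent [set: gT] = (p ^ s)%N ->
  (forall a b : gT, a != 1 -> b != 1 ->
     (#[comm_ab a b] < minn #[a] #[b])%N) /\
  (odd p -> p.-group [set: gT] /\ powerful p [set: gT]).
Proof.
move=> p_pr reg expG.
have pG : p.-group [set: gT] by rewrite -pnat_exponent expG pnatX pnat_id.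
have order_comm_ab_lt (a b : gT) : a != 1 -> (#[comm_ab a b] < #[a])%N.
  rewrite comm_abE -(orderV a) -eq_invg1.
  exact: (regular_order_commg_lt reg p_pr pG).
split=> [a b nt_a nt_b | odd_p].
  by rewrite leq_min order_comm_ab_lt // -invg_comm_ab orderV order_comm_ab_lt.
split=> //; rewrite /powerful odd_p gen_subG.
apply/subsetP=> _ /imset2P[x y _ _ ->].
have [->|nt_x] := eqVneq x 1; first by rewrite comm1g group1.
apply: regular_order_lt_exponent_mho => //.
apply: leq_trans (regular_order_commg_lt reg p_pr pG y nt_x) _.
by rewrite dvdn_leq ?exponent_gt0 ?dvdn_exponent ?inE.
Qed.
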